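(* For every tree $T$, $\operatorname{diam}(\mathcal{C}_3(T))$ equals the maximum of $\|h\|_1$ over all balanced labelings $h$ of $T$.
   Context: Let $T$ be a finite tree with vertex set $V$ and edge set $E$. A proper 3-coloring of $T$ is a map $f\colon V\to\mathbb{Z}/3\mathbb{Z}$ with $f(u)\neq f(v)$ for every edge $uv\in E$. The 3-coloring graph $\mathcal{C}_3(T)$ has the proper 3-colorings as vertices, two colorings adjacent iff they differ at exactly one vertex. A labeling of $T$ is a map $h\colon V\to\mathbb{Z}$ with $|h(u)-h(v)|\le 1$ for every edge $uv\in E$; $\|h\|_1=\sum_{v\in V}|h(v)|$, and $h+m$ denotes $v\mapsto h(v)+m$. A labeling $h$ is balanced if $\|h\|_1\le\|h+3m\|_1$ for all $m\in\mathbb{Z}$. *)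

From mathcomp Require Import all_boot all_order all_algebra.
Set Implicit Arguments. Unset Strict Implicit. Unset Printing Implicit Defensive.
Import Order.TTheory GRing.Theory Num.Theory.

(* A finite simple graph on V : finType is a symmetric irreflexive rel e.
   It is a tree if it is nonempty, connected and has #|V|-1 (unordered) edges,
   i.e. 2(#|V|-1) ordered adjacent pairs. *)
Definition is_tree (V : finType) (e : rel V) : Prop :=
  [/\ symmetric e, irreflexive e, 0 < #|V|,
      (forall u v, connect e u v) &
      #|[set p : V * V | e p.1 p.2]| = 2 * (#|V| - 1)].

Definition proper3 (V : finType) (e : rel V) (f : {ffun V -> 'Z_3}) : bool :=
  [forall u, forall v, e u v ==> (f u != f v)].

Definition col_adj (V : finType) (e : rel V) : rel {ffun V -> 'Z_3} :=
  fun f g => [&& proper3 e f, proper3 e g & #|[set v | f v != g v]| == 1].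

Definition col_walk (V : finType) (e : rel V) (f g : {ffun V -> 'Z_3})
  (s : seq {ffun V -> 'Z_3}) : bool :=
  path (col_adj e) f s && (last f s == g).

Definition col_diam (V : finType) (e : rel V) (D : nat) : Prop :=
  (forall f g, proper3 e f -> proper3 e g ->
     exists s, col_walk e f g s /\ size s <= D) /\
  (exists f g, [/\ proper3 e f, proper3 e g &
     forall s, col_walk e f g s -> D <= size s]).

Definition labeling (V : finType) (e : rel V) (h : V -> int) : Prop :=
  forall u v, e u v -> (`|h u - h v| <= 1)%R.

Definition norm1 (V : finType) (h : V -> int) : nat := \sum_(v : V) `|h v|%N.

Definition balanced (V : finType) (h : V -> int) : Prop :=
  forall m : int, norm1 h <= norm1 (fun v => (h v + 3 * m)%R).

Definition max_balanced (V : finType) (e : rel V) (D : nat) : Prop :=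
  (exists h, [/\ labeling e h, balanced h & norm1 h = D]) /\
  (forall h, labeling e h -> balanced h -> norm1 h <= D).

From mathcomp Require Import all_boot all_order all_algebra zify.
From Stdlib Require Import Classical.
Set Implicit Arguments. Unset Strict Implicit. Unset Printing Implicit Defensive.
Import Order.TTheory GRing.Theory Num.Theory.

(* A proper 3-colouring f of a tree lifts to a height function H : V -> int with
   |H u - H v| = 1 on edges and f = H mod 3, unique up to adding a multiple of 3.
   A recolouring step changes one value of a lift by 2, so a walk of length n from f
   to g gives lifts with sum_v |Hf v - Hg v| <= 2n.  Conversely, when Hf - Hg is even,
   repeatedly lowering a highest vertex of {Hf > Hg} (or of {Hg > Hf}) by 2 is a
   recolouring step, giving a walk of length sum_v |Hf v - Hg v| / 2.  Hence
   dist(f, g) is the minimum of ||h||_1 over the labelings h = (Hf - Hg) / 2, and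
   re-lifting g by a multiple of 6 replaces h by h + 3m, so that minimum is attained
   at a balanced h.  Every labeling h arises this way, from Hg and Hf = Hg + 2h. *)

Definition int_Z3 (a : int) : 'Z_3 := (a%:~R)%R.

Lemma pchar_Z3 : (3 \in [pchar 'Z_3])%R.
Proof. exact: (@pchar_Fp 3). Qed.

Lemma int_Z3_eqE a b : (int_Z3 a == int_Z3 b) = (3 %| (a - b)%R)%Z.
Proof. by rewrite -subr_eq0 -rmorphB /= (dvdz_pcharf pchar_Z3). Qed.

Lemma int_Z3_val (x : 'Z_3) : int_Z3 (val x) = x.
Proof. by rewrite /int_Z3 -pmulrn natr_Zp. Qed.

Lemma connect_ind (T : finType) (r : rel T) (P : T -> Prop) u v :
  P u -> (forall x y, P x -> r x y -> P y) -> connect r u v -> P v.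
Proof.
move=> Pu IH /connectP [p + ->]; elim: p u Pu => //= a p IHp u Pu /andP[ra].
exact: IHp (IH _ _ Pu ra).
Qed.

Lemma shorten_walk (T : finType) (r : rel T) x p : path r x p ->
  exists q, [/\ path r x q, last x q = last x p & size q < #|T|].
Proof.
case/shortenP=> q qpath /card_uniqP card_q _; exists q; split=> //.
by rewrite -ltnS -[(size q).+1]card_q; exact: max_card.
Qed.

Lemma bounded_nat_max (P : nat -> Prop) B :
  (exists n, P n) -> (forall n, P n -> n <= B) ->
  exists m, P m /\ forall n, P n -> n <= m.
Proof.
elim: B => [|B IH] [n Pn] bdP.
  by exists n; split=> // k Pk; move: (bdP k Pk) (bdP n Pn); lia.
have [PB | nPB] := classic (P B.+1); first by exists B.+1.
apply: IH; first by exists n.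
move=> k Pk; have := bdP k Pk; rewrite leq_eqVlt ltnS => /orP[/eqP kB|//].
by rewrite kB in Pk.
Qed.

Lemma exists_nat_argmin (A : Type) (F : A -> nat) (a : A) :
  exists a0, forall a', F a0 <= F a'.
Proof.
move: {2}(F a) (erefl (F a)) => n; elim/ltn_ind: n a => n IH a Fa.
have [[a' lt] | nlt] := classic (exists a', F a' < F a).
  by apply: (IH (F a')) => //; rewrite -Fa.
by exists a => a'; rewrite leqNgt; apply/negP => lt; apply: nlt; exists a'.
Qed.

Lemma eq_norm1 (V : finType) (h h' : V -> int) : h =1 h' -> norm1 h = norm1 h'.
Proof. by move=> eqh; apply: eq_bigr => v _; rewrite eqh. Qed.

Lemma balanced_shift (V : finType) (h : V -> int) :
  exists k : int, balanced (fun v => h v + 3 * k)%R.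
Proof.
have [k kmin] := exists_nat_argmin (fun k : int => norm1 (fun v => h v + 3 * k)%R) 0%R.
exists k => m; apply: leq_trans (kmin (k + m)%R) _.
by rewrite (eq_norm1 (h' := fun v => h v + 3 * k + 3 * m)%R) // => v; lia.
Qed.

Section Heights.
Variables (V : finType) (e : rel V).
Hypotheses (e_sym : symmetric e) (e_irr : irreflexive e).
Hypothesis e_conn : forall u v, connect e u v.

Definition is_height (H : V -> int) := forall u v, e u v -> (`|H u - H v| = 1)%R.

Definition coloring_of (H : V -> int) : {ffun V -> 'Z_3} := [ffun v => int_Z3 (H v)].

Lemma proper3_neq f u v : proper3 e f -> e u v -> f u != f v.
Proof. by move=> /forallP /(_ u) /forallP /(_ v) /implyP. Qed.

Lemma coloring_of_proper H : is_height H -> proper3 e (coloring_of H).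
Proof.
move=> hH; apply/forallP => u; apply/forallP => v; apply/implyP => euv.
by rewrite !ffunE int_Z3_eqE; have := hH u v euv; lia.
Qed.

Lemma eq_coloring_of H H' :
  coloring_of H = coloring_of H' <-> forall v, (3 %| (H v - H' v)%R)%Z.
Proof.
split=> [eqc v | eq3]; last by apply/ffunP => v; rewrite !ffunE; apply/eqP; rewrite int_Z3_eqE.
by rewrite -int_Z3_eqE -!(ffunE (fun v => int_Z3 (_ v))) -/(coloring_of _) eqc.
Qed.

Lemma is_height_shift H c : is_height H -> is_height (fun v => H v + c)%R.
Proof. by move=> hH u v euv; have := hH u v euv; lia. Qed.

Lemma eq_coloring_of_const H H' : is_height H -> is_height H' ->
  coloring_of H = coloring_of H' -> forall u v, (H' u - H u = H' v - H v)%R.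
Proof.
move=> hH hH' /eq_coloring_of eq3 u v.
apply: (connect_ind (P := fun v => H' u - H u = H' v - H v)%R) (e_conn u v) => // x y -> exy.
by have := hH x y exy; have := hH' x y exy; have := eq3 x; have := eq3 y; lia.
Qed.

Lemma height_parity H1 H2 : is_height H1 -> is_height H2 ->
  forall u v, (2 %| (H1 u - H2 u) - (H1 v - H2 v))%Z%R.
Proof.
move=> h1 h2 u v.
apply: (connect_ind (P := fun v => 2 %| (H1 u - H2 u) - (H1 v - H2 v))%Z%R) (e_conn u v).
  by rewrite subrr dvdz0.
by move=> x y px exy; have := h1 x y exy; have := h2 x y exy; lia.
Qed.

Lemma lower_peak H1 H2 v : is_height H1 -> is_height H2 ->
  (forall w, (2 %| (H1 w - H2 w)%R)%Z) ->
  (H2 v < H1 v)%R -> (forall w, (H2 w < H1 w)%R -> (H1 w <= H1 v)%R) ->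
  let H1' := fun x => if x == v then (H1 v - 2)%R else H1 x in
  [/\ is_height H1', forall w, (2 %| (H1' w - H2 w)%R)%Z,
      (norm1 (fun w => H1' w - H2 w)%R).+2 = norm1 (fun w => H1 w - H2 w)%R &
      col_adj e (coloring_of H1) (coloring_of H1')].
Proof.
move=> h1 h2 ev lt_v max_v H1'.
(* A neighbour above v would also lie above H2, contradicting the maximality of v. *)
have nb_v w : e v w -> H1 w = (H1 v - 1)%R.
  move=> evw; have := h1 v w evw; have := h2 v w evw; have := ev v; have := ev w.
  by case: (ltrP (H2 w) (H1 w)) => [/max_v|]; lia.
have hH1' : is_height H1'.
  move=> x w exw; rewrite /H1'; case: (x =P v) => [xv|_]; case: (w =P v) => [wv|_].
  - by move: exw; rewrite xv wv e_irr.
  - by rewrite -xv in nb_v *; rewrite (nb_v w exw); lia.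
  - by rewrite -wv in nb_v *; rewrite (nb_v x); [lia | rewrite e_sym].
  - exact: h1.
split=> //.
- by move=> w; rewrite /H1'; case: (w =P v) => [->|_]; [have := ev v; lia | exact: ev].
- rewrite /norm1 (bigD1 v) // [in RHS](bigD1 v) //= /H1' eqxx.
  rewrite (eq_bigr (fun w => `|(H1 w - H2 w)%R|%N)) => [|w /negbTE -> //].
  by have := ev v; move: lt_v; lia.
- rewrite /col_adj !coloring_of_proper //=; apply/cards1P; exists v; apply/setP => x.
  rewrite !inE !ffunE /H1'; case: (x =P v) => [->|_]; last by rewrite eqxx.
  by rewrite int_Z3_eqE; lia.
Qed.

Lemma col_adj_sym : symmetric (col_adj e).
Proof.
move=> f g; rewrite /col_adj andbCA; congr [&& _, _ & _ == 1].
by apply: eq_card => x; rewrite !inE eq_sym.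
Qed.

Lemma walk_of_heights H1 H2 : is_height H1 -> is_height H2 ->
  (forall w, (2 %| (H1 w - H2 w)%R)%Z) ->
  exists s, col_walk e (coloring_of H1) (coloring_of H2) s /\
            2 * size s <= norm1 (fun w => H1 w - H2 w)%R.
Proof.
move: {2}(norm1 _) (erefl (norm1 (fun w => H1 w - H2 w)%R)) => N.
elim/ltn_ind: N H1 H2 => N IH H1 H2 normN h1 h2 ev.
have normC (F G : V -> int) : norm1 (fun w => F w - G w)%R = norm1 (fun w => G w - F w)%R.
  by apply: eq_bigr => w _; lia.
have [w0 lt0 | above] := pickP [pred w | H2 w < H1 w]%R.
  have [v lt_v max_v] := @arg_maxP _ _ _ w0 [pred w | H2 w < H1 w]%R H1 lt0.
  have [h1' ev' norm' adj] := lower_peak h1 h2 ev lt_v max_v.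
  have [|s [ws size_s]] := IH _ _ _ _ (erefl _) h1' h2 ev'; first by rewrite -normN -norm'.
  exists (coloring_of (fun x => if x == v then (H1 v - 2)%R else H1 x) :: s).
  split; first by rewrite /col_walk /= adj.
  by move: size_s; rewrite -norm' /=; move: (norm1 _) => n; lia.
(* Otherwise lower H2 instead, and reach it by a final step back up. *)
have [w0 lt0 | below] := pickP [pred w | H1 w < H2 w]%R.
  have [v lt_v max_v] := @arg_maxP _ _ _ w0 [pred w | H1 w < H2 w]%R H2 lt0.
  have ev2 w : (2 %| (H2 w - H1 w)%R)%Z by have := ev w; lia.
  have [h2' ev' norm' adj] := lower_peak h2 h1 ev2 lt_v max_v.
  set H2' := fun x => if x == v then _ else _ in h2' ev' norm' adj.
  have ev'' w : (2 %| (H1 w - H2' w)%R)%Z.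
    by have := ev' w; rewrite /H2'; case: (w == v); lia.
  have normN' : N = (norm1 (fun w => H1 w - H2' w)%R).+2 by rewrite -normN normC -norm' normC.
  have [|s [ws size_s]] := IH _ _ _ _ (erefl _) h1 h2' ev''; first by rewrite normN'.
  exists (rcons s (coloring_of H2)); case/andP: ws => ps /eqP ls.
  rewrite /col_walk rcons_path ps ls last_rcons col_adj_sym adj eqxx size_rcons.
  by rewrite normN normN'; lia.
exists [::]; split=> //; rewrite /col_walk /=; apply/eqP/ffunP => x; rewrite !ffunE.
by congr int_Z3; have /= := above x; have /= := below x; lia.
Qed.

Lemma step_lift H f' : is_height H -> col_adj e (coloring_of H) f' ->
  exists H', [/\ is_height H', coloring_of H' = f', (forall w, (2 %| (H' w - H w)%R)%Z) &
                 norm1 (fun w => H' w - H w)%R = 2].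
Proof.
move=> hH /and3P [_ pf' /cards1P [v vE]].
have same x : x != v -> f' x = int_Z3 (H x).
  move=> xv; apply/eqP; rewrite eq_sym -[_ == _]negbK.
  by apply: contra xv => neq; rewrite -in_set1 -vE inE ffunE.
have fv : f' v != int_Z3 (H v) by have := set11 v; rewrite -vE inE ffunE eq_sym.
(* The new colour at v differs from the old one, so it is the colour of H v + 2 or H v - 2. *)
pose t : int := if f' v == int_Z3 (H v + 2)%R then 2%R else (-2)%R.
have tv : t = 2%R \/ t = (-2)%R by rewrite /t; case: ifP; [left|right].
have ft : f' v = int_Z3 (H v + t)%R.
  rewrite /t; case: ifP => [/eqP //|/negbT].
  move: fv; rewrite -(int_Z3_val (f' v)) !int_Z3_eqE => a b; apply/eqP.
  by rewrite int_Z3_eqE; move: a b; move: (val (f' v)) => k; lia.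
clearbody t.
exists (fun x => if x == v then (H v + t)%R else H x); split.
- move=> u w euw; case: (u =P v) => [uv|/eqP uv]; case: (w =P v) => [wv|/eqP wv].
  + by move: euw; rewrite uv wv e_irr.
  + have := proper3_neq pf' euw; rewrite uv ft same // int_Z3_eqE.
    by have := hH u w euw; rewrite uv; case: tv => ->; lia.
  + have := proper3_neq pf' euw; rewrite wv ft same // int_Z3_eqE.
    by have := hH u w euw; rewrite wv; case: tv => ->; lia.
  + exact: hH.
- apply/ffunP => x; rewrite ffunE; case: (x =P v) => [->|/eqP xv]; first by rewrite ft.
  by rewrite same.
- by move=> w; case: (w =P v) => [->|_]; [case: tv => ->; lia | lia].
- rewrite /norm1 (bigD1 v) //= big1 => [|x /negbTE ->]; last by lia.
  by rewrite eqxx; case: tv => ->; lia.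
Qed.

Lemma walk_lift s H : is_height H -> path (col_adj e) (coloring_of H) s ->
  exists H', [/\ is_height H', coloring_of H' = last (coloring_of H) s,
     (forall w, (2 %| (H' w - H w)%R)%Z) & norm1 (fun w => H' w - H w)%R <= 2 * size s].
Proof.
elim: s H => [|f s IH] H hH /=.
  by move=> _; exists H; split=> // [w|]; rewrite ?subrr // /norm1 big1 // => w _; rewrite subrr.
case/andP => adj; have [H1 [h1 <- ev1 norm1_1]] := step_lift hH adj => pth.
have [H' [h' c' ev' norm']] := IH H1 h1 pth.
exists H'; split=> // [w|]; first by have := ev' w; have := ev1 w; lia.
apply: leq_trans (_ : \sum_w (`|(H' w - H1 w)%R|%N + `|(H1 w - H w)%R|%N) <= _).
  by apply: leq_sum => w _; lia.
rewrite big_split /= -!/(norm1 (fun w => _ w - _ w)%R) norm1_1.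
by move: norm'; move: (norm1 _) => n; lia.
Qed.

End Heights.

Section InducedTree.
Variables (V : finType) (e : rel V).
Hypotheses (e_sym : symmetric e) (e_irr : irreflexive e).

Definition induced (S : {set V}) : rel V := fun x y => [&& e x y, x \in S & y \in S].

Definition induced_arcs (S : {set V}) := [set p : V * V | induced S p.1 p.2].

Definition degree (S : {set V}) x := #|[set y in S | e x y]|.

Definition induced_tree (S : {set V}) :=
  [/\ 0 < #|S|, {in S &, forall u v, connect (induced S) u v} &
      #|induced_arcs S| = 2 * (#|S| - 1)].

Lemma induced_arcs_card S : #|induced_arcs S| = \sum_(x in S) degree S x.
Proof.
rewrite /degree; under eq_bigr => x _ do rewrite -sum1_card.
rewrite pair_big_dep /= -sum1_card; apply: eq_bigl => -[a b] /=.
by rewrite !inE /induced /=; case: (a \in S); case: (b \in S); case: (e a b).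
Qed.

Lemma induced_tree_leaf S : induced_tree S -> 1 < #|S| ->
  exists l p, l \in S /\ [set y in S | e l y] = [set p].
Proof.
case=> _ S_conn S_arcs S_gt1.
have degree_gt0 x : x \in S -> 0 < degree S x.
  move=> xS; have [y yS yx] : exists2 y, y \in S & y != x.
    case/card_gt1P: S_gt1 => a [b [aS bS ab]].
    by case: (a =P x) => [<-|/eqP ax]; [exists b; rewrite // eq_sym | exists a].
  have /connectP [[|z p] /= pth yE] := S_conn x y xS yS; first by rewrite yE eqxx in yx.
  case/andP: pth => /and3P [exz _ zS] _.
  by apply/card_gt0P; exists z; rewrite inE zS exz.
have [/exists_inP [l lS deg_l] | deg_ge2] := boolP [exists x in S, degree S x < 2].
  have /cards1P [p pE] : degree S l == 1 by move: (degree_gt0 l lS) deg_l; lia.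
  by exists l, p.
(* Otherwise the degrees add up to at least 2 #|S| > #|induced_arcs S|. *)
have : \sum_(x in S) 2 <= \sum_(x in S) degree S x.
  by apply: leq_sum => x xS; move/exists_inPn/(_ x xS): deg_ge2; rewrite -leqNgt.
by rewrite sum_nat_const -induced_arcs_card S_arcs; lia.
Qed.

Lemma unique_neighbor (S : {set V}) l p : [set y in S | e l y] = [set p] ->
  [/\ p \in S, e l p & {in S, forall y, e l y -> y = p}].
Proof.
move=> lE; have /[!inE] /andP [pS elp] : p \in [set y in S | e l y] by rewrite lE set11.
by split=> // y yS ely; apply/set1P; rewrite -lE inE yS ely.
Qed.

Lemma induced_tree_delete_leaf S l p : induced_tree S -> l \in S ->
  [set y in S | e l y] = [set p] -> induced_tree (S :\ l).
Proof.
case=> _ S_conn S_arcs lS lE.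
have [pS elp nb_l] := unique_neighbor lE.
have pl : p != l by apply: contraTneq elp => ->; rewrite e_irr.
have card_S : #|S| = #|S :\ l|.+1 by rewrite (cardsD1 l S) lS.
split.
- by apply/card_gt0P; exists p; rewrite !inE pl.
- move=> u v; rewrite !inE => /andP [ul uS] /andP [vl vS].
  (* A walk in S from u may pass through the leaf l only from p back to p. *)
  pose P x := (x = l /\ connect (induced (S :\ l)) u p) \/
              (x != l /\ connect (induced (S :\ l)) u x).
  suff [[vl'] | [_ //]] : P v by rewrite vl' eqxx in vl.
  apply: (connect_ind _ _ (S_conn u v uS vS)); first by right.
  move=> x y [[-> cup] | [xl cux]] /and3P [exy xS yS].
    by right; rewrite (nb_l y yS exy).
  case: (y =P l) => [yl | /eqP yl].
    by left; split=> //; rewrite -(nb_l x xS) // e_sym -yl.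
  right; split=> //; apply: connect_trans cux (connect1 _).
  by rewrite /induced !inE exy xl xS yS yl.
- have arcs_del : induced_arcs (S :\ l) = induced_arcs S :\ (l, p) :\ (p, l).
    apply/setP => -[a b]; rewrite !inE /induced !inE /= !xpair_eqE.
    case: (a =P l) => [->|al]; case: (b =P l) => [->|bl] /=; rewrite ?e_irr ?andbF //.
      by symmetry; apply/negbTE/and5P => -[_ bp elb _ bS]; rewrite (nb_l b bS elb) eqxx in bp.
    symmetry; rewrite andbT; apply/negbTE/and4P => -[ap eal aS _].
    by rewrite e_sym in eal; rewrite (nb_l a aS eal) eqxx in ap.
  have lp_arc : (l, p) \in induced_arcs S by rewrite inE /induced /= elp lS pS.
  have pl_arc : (p, l) \in induced_arcs S :\ (l, p).
    by rewrite !inE /induced /= xpair_eqE (negbTE pl) /= e_sym elp lS pS.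
  move: (cardsD1 (l, p) (induced_arcs S)) (cardsD1 (p, l) (induced_arcs S :\ (l, p))).
  by rewrite lp_arc pl_arc -arcs_del S_arcs card_S; lia.
Qed.

Lemma induced_tree_potential (d : V -> V -> int) :
  (forall u v, e u v -> d v u = - d u v)%R ->
  forall S, induced_tree S ->
  exists H : V -> int, {in S &, forall u v, e u v -> H u - H v = d u v}%R.
Proof.
move=> d_anti S; have [n] := ubnP #|S|; elim: n S => // n IH S S_n S_tree.
have [S_le1 | S_gt1] := leqP #|S| 1.
  exists (fun=> 0%R) => u v uS vS.
  by rewrite (card_le1_eqP S_le1 u v uS vS) e_irr.
have [l [p [lS lE]]] := induced_tree_leaf S_tree S_gt1.
have [pS elp nb_l] := unique_neighbor lE.
have [|H HP] := IH (S :\ l) _ (induced_tree_delete_leaf S_tree lS lE).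
  by move: (cardsD1 l S) S_n; rewrite lS; lia.
exists (fun x => if x == l then H p + d l p else H x)%R => u v uS vS euv.
case: (u =P l) => [ul|/eqP ul]; case: (v =P l) => [vl|/eqP vl].
- by move: euv; rewrite ul vl e_irr.
- have vp : v = p by apply: nb_l; rewrite // -ul.
  by rewrite ul vp addrAC subrr add0r.
- have up : u = p by apply: nb_l; rewrite // e_sym -vl.
  by rewrite vl up (d_anti _ _ elp) opprD addrA subrr add0r.
- by apply: HP; rewrite // !inE ?ul ?vl.
Qed.

End InducedTree.

Section Tree.
Variables (V : finType) (e : rel V).
Hypothesis e_tree : is_tree e.

Let e_sym : symmetric e. Proof. by case: e_tree. Qed.
Let e_irr : irreflexive e. Proof. by case: e_tree. Qed.
Let e_conn u v : connect e u v. Proof. by case: e_tree. Qed.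
Let V_gt0 : 0 < #|V|. Proof. by case: e_tree. Qed.

Lemma tree_potential (d : V -> V -> int) : (forall u v, e u v -> d v u = - d u v)%R ->
  exists H : V -> int, forall u v, e u v -> (H u - H v = d u v)%R.
Proof.
move=> d_anti; have [|H HP] := induced_tree_potential e_sym e_irr d_anti (S := [set: V]).
  case: e_tree => _ _ _ conn arcs; split; rewrite ?cardsT //.
    by move=> u v _ _; rewrite (@eq_connect _ _ e) // => x y; rewrite /induced !inE !andbT.
  by rewrite -arcs; apply: eq_card => -[x y]; rewrite !inE /induced !inE !andbT.
by exists H => u v; apply: HP; rewrite inE.
Qed.

Lemma proper3_lift f : proper3 e f -> exists H, is_height e H /\ coloring_of H = f.
Proof.
move=> pf.
pose fz x : int := val (f x).
have f_lt3 x : val (f x) < 3 := ltn_ord (f x).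
pose d u v : int := if (3 %| fz u - fz v - 1)%Z%R then 1%R else (-1)%R.
have d_pm1 u v : d u v = 1%R \/ d u v = (-1)%R by rewrite /d; case: ifP; [left|right].
have d_mod3 u v : e u v -> (3 %| d u v - (fz u - fz v))%Z%R.
  move=> euv; have := proper3_neq pf euv; rewrite -val_eqE /d /fz.
  have := f_lt3 u; have := f_lt3 v; move: (val (f u)) (val (f v)) => a b.
  by case: ifP; lia.
have d_anti u v : e u v -> d v u = (- d u v)%R.
  move=> euv; have evu : e v u by rewrite e_sym.
  have := d_mod3 u v euv; have := d_mod3 v u evu.
  by case: (d_pm1 u v) => ->; case: (d_pm1 v u) => ->; lia.
have [H0 H0P] := tree_potential d_anti.
have /card_gt0P [r _] := V_gt0.
pose H x := (H0 x + (fz r - H0 r))%R.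
exists H; split.
  by move=> u v euv; have := H0P u v euv; rewrite /H; case: (d_pm1 u v) => ->; lia.
apply/ffunP => x; rewrite ffunE -[f x]int_Z3_val; apply/eqP; rewrite int_Z3_eqE.
apply: (connect_ind (P := fun x => 3 %| H x - fz x)%Z%R) (e_conn r x); first by rewrite /H; lia.
move=> y z y3 eyz; have := H0P y z eyz; have := d_mod3 y z eyz; move: y3; rewrite /H; lia.
Qed.

Lemma proper3_lift_even f g : proper3 e f -> proper3 e g ->
  exists Hf Hg, [/\ is_height e Hf, is_height e Hg, coloring_of Hf = f,
                    coloring_of Hg = g & forall v, (2 %| (Hf v - Hg v)%R)%Z].
Proof.
move=> pf pg; have [Hf [hf <-]] := proper3_lift pf; have [Hg [hg <-]] := proper3_lift pg.
have /card_gt0P [r _] := V_gt0.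
(* Adding 3 to Hg keeps its colouring and flips the parity of Hf - Hg. *)
pose c : int := if (2 %| (Hf r - Hg r)%R)%Z then 0%R else 3%R.
have c_val : c = 0%R /\ (2 %| (Hf r - Hg r)%R)%Z \/ c = 3%R /\ ~~ (2 %| (Hf r - Hg r)%R)%Z.
  by rewrite /c; case: ifP; [left|right].
exists Hf, (fun v => Hg v + c)%R; split=> //.
- exact: is_height_shift.
- by apply/eq_coloring_of => v; case: c_val => -[-> _]; lia.
- move=> v; have := height_parity e_conn hf hg v r.
  by case: c_val => -[-> par]; move: par; lia.
Qed.

Lemma dist_le_balanced f g : proper3 e f -> proper3 e g ->
  exists h, [/\ labeling e h, balanced h &
              exists2 s, col_walk e f g s & size s <= norm1 h].
Proof.
move=> pf pg; have [Hf [Hg [hf hg <- <- even]]] := proper3_lift_even pf pg.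
pose h0 v := ((Hf v - Hg v) %/ 2)%Z.
have [k bal] := balanced_shift h0.
(* Lowering Hg by 6k keeps its colouring and the parity, and shifts (Hf - Hg)/2 by 3k. *)
pose Hg' v := (Hg v + - (6 * k))%R.
have even' v : (2 %| (Hf v - Hg' v)%R)%Z by have := even v; rewrite /Hg'; lia.
have hg' : is_height e Hg' by exact: is_height_shift.
have [s [ws size_s]] := walk_of_heights e_sym e_irr hf hg' even'.
exists (fun v => h0 v + 3 * k)%R; split=> //.
  move=> u v euv; have := hf u v euv; have := hg u v euv.
  by have := even u; have := even v; rewrite /h0; lia.
exists s.
  rewrite (_ : coloring_of Hg = coloring_of Hg') //.
  by apply/eq_coloring_of => v; rewrite /Hg'; lia.
suff norm_diff : norm1 (fun v => Hf v - Hg' v)%R = 2 * norm1 (fun v => h0 v + 3 * k)%R.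
  by move: size_s; rewrite norm_diff; move: (norm1 _) => n; lia.
by rewrite /norm1 big_distrr /=; apply: eq_bigr => v _; have := even v; rewrite /Hg' /h0; lia.
Qed.

Lemma labeling_heights h : labeling e h ->
  exists H, is_height e H /\ is_height e (fun v => H v + 2 * h v)%R.
Proof.
move=> hl.
(* H steps against h where h steps; where h is flat, edges are oriented by enum_rank. *)
pose d u v : int :=
  if h u == h v then (if enum_rank u < enum_rank v then 1%R else (-1)%R) else (h v - h u)%R.
have d_anti u v : e u v -> d v u = (- d u v)%R.
  move=> euv; have uv : u != v by apply: contraTneq euv => ->; rewrite e_irr.
  have ruv : nat_of_ord (enum_rank u) != enum_rank v.
    by apply: contra_neq uv => /ord_inj/enum_rank_inj.
  rewrite /d eq_sym; case: (h u =P h v) => [_|_]; last lia.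
  by move: ruv; move: (nat_of_ord _) (nat_of_ord _) => a b; case: ifP; case: ifP; lia.
have d_cases u v : (h u <> h v /\ d u v = h v - h u \/ h u = h v /\ `|d u v| = 1)%R.
  by rewrite /d; case: (h u =P h v) => [huv|]; [right; split=> //; case: ifP | left].
clearbody d; have [H HP] := tree_potential d_anti.
exists H; split=> u v euv; have := HP u v euv; have := hl u v euv.
  by case: (d_cases u v) => -[huv dv]; lia.
by case: (d_cases u v) => -[huv dv]; lia.
Qed.

Lemma balanced_le_dist h : labeling e h -> balanced h ->
  exists f g, [/\ proper3 e f, proper3 e g &
                  forall s, col_walk e f g s -> norm1 h <= size s].
Proof.
move=> hl hb; have [Hg [hg hf]] := labeling_heights hl.
exists (coloring_of (fun v => Hg v + 2 * h v)%R), (coloring_of Hg).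
split; try exact: coloring_of_proper.
move=> s /andP [ws /eqP ls].
have [H' [h' cH' even' norm']] := walk_lift e_irr hf ws; rewrite ls in cH'.
have shift := eq_coloring_of_const e_conn hg h' (esym cH').
have /eq_coloring_of eq3 := cH'.
have /card_gt0P [r _] := V_gt0.
(* H' = Hg + c with 6 %| c, so |H' - (Hg + 2h)| = 2 |h - c/2| = 2 |h + 3m|. *)
pose m : int := (- ((H' r - Hg r)%R %/ 6)%Z)%R.
have norm_diff :
    norm1 (fun w => H' w - (Hg w + 2 * h w))%R = 2 * norm1 (fun v => h v + 3 * m)%R.
  rewrite /norm1 big_distrr /=; apply: eq_bigr => w _.
  by have := shift w r; have := even' r; have := eq3 r; rewrite /m; lia.
by move: (hb m) norm'; rewrite norm_diff; move: (norm1 _) (norm1 _) => a b; lia.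
Qed.

Lemma balanced_norm1_lt h : labeling e h -> balanced h -> norm1 h < #|{ffun V -> 'Z_3}|.
Proof.
move=> hl hb; have [f [g [pf pg far]]] := balanced_le_dist hl hb.
have [_ [_ _ [s /andP [ws /eqP ls] _]]] := dist_le_balanced pf pg.
have [s' [ws' ls' size_s']] := shorten_walk ws.
have walk_s' : col_walk e f g s' by rewrite /col_walk ws' ls' ls eqxx.
exact: leq_ltn_trans (far s' walk_s') size_s'.
Qed.

Lemma max_balanced_exists : exists D, max_balanced e D.
Proof.
pose P n := exists h, [/\ labeling e h, balanced h & norm1 h = n].
have [||D [PD maxD]] := @bounded_nat_max P #|{ffun V -> 'Z_3}|.
- have norm1_0 : norm1 (fun _ : V => 0%R : int) = 0 by rewrite /norm1 big1.
  by exists 0, (fun=> 0%R); split=> // m; rewrite norm1_0.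
- by move=> n [h [hl hb <-]]; exact/ltnW/balanced_norm1_lt.
- by exists D; split=> // h hl hb; apply: maxD; exists h.
Qed.

End Tree.

Theorem mainTheorem7 (V : finType) (e : rel V) :
  is_tree e -> exists D : nat, col_diam e D /\ max_balanced e D.
Proof.
move=> e_tree; have [D maxD] := max_balanced_exists e_tree.
exists D; split=> //; split.
- move=> f g pf pg; have [h [hl hb [s ws size_s]]] := dist_le_balanced e_tree pf pg.
  by exists s; split=> //; apply: leq_trans size_s (maxD.2 h hl hb).
- by have [h [hl hb <-]] := maxD.1; exact: balanced_le_dist.
Qed.
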